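(* Let $d\ge1$ and $L\ge2$ be integers, $\Phi\in\mathbb{R}^{d\times d}$, and $W_1,\dots,W_L\in\mathbb{R}^{d\times d}$. Let $\mathcal{R}=\tfrac12\|W_{L:1}-\Phi\|_F^2$ and $D_l=W_{l+1}^\intercal W_{l+1}-W_lW_l^\intercal$ for $l=1,\dots,L-1$. Suppose there are $\alpha\ge 0$ and $\phi>0$ with $\|W_l\|_2\le\alpha$ for $l=1,\dots,L-1$ and $1\le\alpha^{2(L-1)}<L\phi^2$, and suppose $\|D_l\|_2\le\delta$ for $l=1,\dots,L-2$ and $\|I+D_{L-1}\|_2\le\varepsilon$, where $\delta\le(2L^3\phi^2)^{-1}$ and $\varepsilon\le(4L^2)^{-1}$. Then $$\|\nabla_L\mathcal{R}\|_F^2\ge\mathcal{R}.$$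
   Context: For $l_2\ge l_1$ write $W_{l_2:l_1}=W_{l_2}\cdots W_{l_1}$, empty products being the identity $I$. $\nabla_L\mathcal{R}=(W_{L:1}-\Phi)W_{L-1:1}^\intercal$ is the gradient of $\mathcal{R}(W_1,\dots,W_L)=\tfrac12\|W_L\cdots W_1-\Phi\|_F^2$ with respect to $W_L$. $\|\cdot\|_2$ is the spectral norm and $\|\cdot\|_F$ the Frobenius norm. *)

From HB Require Import structures.
From mathcomp Require Import all_boot all_order all_algebra.
From mathcomp Require Import all_classical all_reals.
Set Implicit Arguments. Unset Strict Implicit. Unset Printing Implicit Defensive.
Import Order.TTheory GRing.Theory Num.Theory.
Local Open Scope ring_scope.
Local Open Scope classical_set_scope.

Definition frob (R : realType) (m n : nat) (A : 'M[R]_(m, n)) : R :=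
  Num.sqrt (\sum_(i < m) \sum_(j < n) A i j ^+ 2).

Definition specnorm (R : realType) (m n : nat) (A : 'M[R]_(m, n)) : R :=
  sup [set frob (A *m v) | v in [set v : 'cV[R]_n | frob v = 1]].

Fixpoint mprod (R : realType) (d : nat) (W : nat -> 'M[R]_d) (l1 k : nat)
  : 'M[R]_d :=
  match k with
  | 0 => 1%:M
  | k'.+1 => W (l1 + k')%N *m mprod W l1 k'
  end.

(* W_{l2:l1} = W_l2 ... W_l1, the identity when l2 < l1. *)
Definition Wprod (R : realType) (d : nat) (W : nat -> 'M[R]_d) (l2 l1 : nat)
  : 'M[R]_d := mprod W l1 (l2.+1 - l1).

Definition risk (R : realType) (d L : nat) (W : nat -> 'M[R]_d) (Phi : 'M[R]_d)
  : R := 2^-1 * frob (Wprod W L 1 - Phi) ^+ 2.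

Definition gradL (R : realType) (d L : nat) (W : nat -> 'M[R]_d) (Phi : 'M[R]_d)
  : 'M[R]_d := (Wprod W L 1 - Phi) *m (Wprod W L.-1 1)^T.

Definition Dmat (R : realType) (d : nat) (W : nat -> 'M[R]_d) (l : nat)
  : 'M[R]_d := (W l.+1)^T *m W l.+1 - W l *m (W l)^T.

From HB Require Import structures.
From mathcomp Require Import all_boot all_order all_algebra.
From mathcomp Require Import all_classical all_reals.
From mathcomp Require Import ring lra zify.
Import Order.TTheory GRing.Theory Num.Theory.
Set Implicit Arguments. Unset Strict Implicit. Unset Printing Implicit Defensive.
Local Open Scope ring_scope.

(* Write [bounded_below c A] for sigma_min(A)^2 >= c.  Since
   W_(L-1) W_(L-1)^T = W_L^T W_L + I - (I + D_(L-1)), the matrix W_(L-1)^T, and hence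
   W_(L-1) (a square matrix and its transpose share their smallest singular value), is bounded
   below by 1 - eps.  Likewise W_l W_l^T = W_(l+1)^T W_(l+1) - D_l turns a bound c for W_(l+1)
   into the bound c - delta for W_l.  So every W_l with l < L is bounded below by 1 - x, where
   x = eps + (L - 2) delta, and W_(L-1:1) by (1 - x)^(L-1) >= 1 - (L - 1) x >= 1/2 (Bernoulli's
   inequality and the bounds on delta and eps).  Row by row, this gives
   ||G W_(L-1:1)^T||_F^2 >= ||G||_F^2 / 2 for G = W_(L:1) - Phi. *)

Section EuclideanNorm.
Variable R : realType.

Definition vdot n (u v : 'cV[R]_n) : R := (u^T *m v) 0 0.
Definition sqnorm n (v : 'cV[R]_n) : R := vdot v v.

Lemma vdotE n (u v : 'cV[R]_n) : vdot u v = \sum_i u i 0 * v i 0.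
Proof. by rewrite /vdot mxE; apply: eq_bigr => i _; rewrite mxE. Qed.

Lemma vdotC n (u v : 'cV[R]_n) : vdot u v = vdot v u.
Proof. by rewrite !vdotE; apply: eq_bigr => i _; rewrite mulrC. Qed.

Lemma vdotDr n (u v w : 'cV[R]_n) : vdot u (v + w) = vdot u v + vdot u w.
Proof. by rewrite /vdot mulmxDr mxE. Qed.

Lemma vdotBr n (u v w : 'cV[R]_n) : vdot u (v - w) = vdot u v - vdot u w.
Proof. by rewrite /vdot mulmxBr !mxE. Qed.

Lemma vdotZr n a (u v : 'cV[R]_n) : vdot u (a *: v) = a * vdot u v.
Proof. by rewrite /vdot -scalemxAr mxE. Qed.

Lemma vdotBl n (u v w : 'cV[R]_n) : vdot (u - v) w = vdot u w - vdot v w.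
Proof. by rewrite !(vdotC _ w) vdotBr. Qed.

Lemma vdotZl n a (u v : 'cV[R]_n) : vdot (a *: u) v = a * vdot u v.
Proof. by rewrite !(vdotC _ v) vdotZr. Qed.

Lemma vdot_mulmx m n (u : 'cV[R]_m) (A : 'M[R]_(m, n)) v :
  vdot u (A *m v) = vdot (A^T *m u) v.
Proof. by rewrite /vdot trmx_mul trmxK mulmxA. Qed.

Lemma sqnorm_mulmx m n (A : 'M[R]_(m, n)) v :
  sqnorm (A *m v) = vdot v ((A^T *m A) *m v).
Proof. by rewrite /sqnorm vdot_mulmx vdotC mulmxA. Qed.

Lemma sqnormE n (v : 'cV[R]_n) : sqnorm v = \sum_i v i 0 ^+ 2.
Proof. by rewrite /sqnorm vdotE; apply: eq_bigr => i _; rewrite expr2. Qed.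

Lemma sqnorm_ge0 n (v : 'cV[R]_n) : 0 <= sqnorm v.
Proof. by rewrite sqnormE sumr_ge0 // => i _; rewrite sqr_ge0. Qed.

Lemma sqnorm_eq0 n (v : 'cV[R]_n) : (sqnorm v == 0) = (v == 0).
Proof.
apply/idP/eqP => [|->]; last by rewrite sqnormE big1 // => i _; rewrite mxE expr0n.
rewrite sqnormE psumr_eq0 => [/allP v0|i _]; last exact: sqr_ge0.
apply/matrixP => i j; rewrite ord1 mxE.
by apply/eqP; rewrite -sqrf_eq0; apply: v0; rewrite mem_index_enum.
Qed.

Lemma sqnorm0 n : sqnorm (0 : 'cV[R]_n) = 0.
Proof. by apply/eqP; rewrite sqnorm_eq0. Qed.

Lemma sqnorm_gt0 n (v : 'cV[R]_n) : (0 < sqnorm v) = (v != 0).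
Proof. by rewrite lt_def sqnorm_eq0 sqnorm_ge0 andbT. Qed.

Lemma sqnormZ n a (v : 'cV[R]_n) : sqnorm (a *: v) = a ^+ 2 * sqnorm v.
Proof. by rewrite /sqnorm vdotZr vdotC vdotZr mulrA expr2. Qed.

Lemma vdot_CauchySchwarz n (u v : 'cV[R]_n) : vdot u v ^+ 2 <= sqnorm u * sqnorm v.
Proof.
have [->|v0] := eqVneq v 0; first by rewrite sqnorm0 /vdot mulmx0 mxE expr0n mulr0.
have v_gt0 : 0 < sqnorm v by rewrite sqnorm_gt0.
(* [0 <= |<v,v> u - <u,v> v|^2 = <v,v> (<u,u> <v,v> - <u,v>^2)] *)
have := sqnorm_ge0 (sqnorm v *: u - vdot u v *: v).
rewrite {1}/sqnorm !(vdotBr, vdotBl, vdotZr, vdotZl) (vdotC v u).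
rewrite /sqnorm in v_gt0 *; nra.
Qed.

Lemma sqr_frob m n (A : 'M[R]_(m, n)) : frob A ^+ 2 = \sum_i sqnorm (row i A)^T.
Proof.
rewrite sqr_sqrtr; last by do 2![apply: sumr_ge0 => ? _]; exact: sqr_ge0.
by apply: eq_bigr => i _; rewrite sqnormE; apply: eq_bigr => j _; rewrite !mxE.
Qed.

Lemma sqr_frob_col n (v : 'cV[R]_n) : frob v ^+ 2 = sqnorm v.
Proof.
rewrite sqr_frob sqnormE; apply: eq_bigr => i _.
by rewrite sqnormE big_ord1 !mxE.
Qed.

Lemma frob_col n (v : 'cV[R]_n) : frob v = Num.sqrt (sqnorm v).
Proof. by rewrite -sqr_frob_col sqrtr_sqr ger0_norm ?sqrtr_ge0. Qed.

Lemma sqnorm_mulmx_le_frob m n (M : 'M[R]_(m, n)) (v : 'cV[R]_n) :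
  sqnorm (M *m v) <= frob M ^+ 2 * sqnorm v.
Proof.
rewrite sqr_frob mulr_suml sqnormE; apply: ler_sum => i _.
have -> : (M *m v) i 0 = vdot (row i M)^T v.
  by rewrite vdotE mxE; apply: eq_bigr => j _; rewrite !mxE.
exact: vdot_CauchySchwarz.
Qed.

Lemma frob_normalize n (v : 'cV[R]_n) : v != 0 -> frob ((Num.sqrt (sqnorm v))^-1 *: v) = 1.
Proof.
rewrite -sqnorm_gt0 => v_gt0.
by rewrite frob_col sqnormZ exprVn sqr_sqrtr ?mulVf ?sqrtr1 // ?gt_eqF // ltW.
Qed.

Lemma frob_mulmx_le_specnorm m n (M : 'M[R]_(m, n)) (v : 'cV[R]_n) :
  frob v = 1 -> frob (M *m v) <= specnorm M.
Proof.
move=> v1; apply: ub_le_sup; last by exists v.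
exists (frob M) => _ [u /= u1 <-].
rewrite -(ler_pXn2r (n:=2)) ?nnegrE ?sqrtr_ge0 //.
have := sqnorm_mulmx_le_frob M u.
by rewrite -[sqnorm u]sqr_frob_col u1 expr1n mulr1 -sqr_frob_col.
Qed.

Lemma sqnorm_mulmx_le_specnorm m n (M : 'M[R]_(m, n)) (v : 'cV[R]_n) :
  sqnorm (M *m v) <= specnorm M ^+ 2 * sqnorm v.
Proof.
have [->|v0] := eqVneq v 0; first by rewrite mulmx0 !sqnorm0 mulr0.
set s := Num.sqrt (sqnorm v); set u := s^-1 *: v.
have s_gt0 : 0 < s by rewrite sqrtr_gt0 sqnorm_gt0.
have Mu_le : frob (M *m u) <= specnorm M by apply/frob_mulmx_le_specnorm/frob_normalize.
have -> : M *m v = s *: (M *m u) by rewrite -scalemxAr scalerA mulfV ?gt_eqF ?scale1r.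
rewrite sqnormZ -[sqnorm v](sqr_sqrtr (sqnorm_ge0 v)) -/s [X in _ <= X]mulrC.
rewrite ler_wpM2l ?sqr_ge0 // -sqr_frob_col ler_pXn2r ?nnegrE ?sqrtr_ge0 //.
exact: le_trans (sqrtr_ge0 _) Mu_le.
Qed.

Lemma vdot_mulmx_le_specnorm n (M : 'M[R]_n) (v : 'cV[R]_n) :
  vdot v (M *m v) <= specnorm M * sqnorm v.
Proof.
have [->|v0] := eqVneq v 0; first by rewrite /vdot !mulmx0 mxE sqnorm0 mulr0.
have spec_ge0 : 0 <= specnorm M.
  exact: le_trans (sqrtr_ge0 _) (frob_mulmx_le_specnorm M (frob_normalize v0)).
have bound_ge0 : 0 <= specnorm M * sqnorm v by rewrite mulr_ge0 ?sqnorm_ge0.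
have sqr_le : vdot v (M *m v) ^+ 2 <= (specnorm M * sqnorm v) ^+ 2.
  apply: le_trans (vdot_CauchySchwarz _ _) _.
  have := sqnorm_mulmx_le_specnorm M v; have := sqnorm_ge0 v; nra.
nra.
Qed.

End EuclideanNorm.

Section BoundedBelow.
Variable R : realType.

Definition bounded_below m n (c : R) (A : 'M[R]_(m, n)) :=
  forall x, c * sqnorm x <= sqnorm (A *m x).

Lemma bounded_belowW m n (c c' : R) (A : 'M[R]_(m, n)) :
  c' <= c -> bounded_below c A -> bounded_below c' A.
Proof. by move=> le_c Ac x; apply: le_trans (Ac x); rewrite ler_wpM2r ?sqnorm_ge0. Qed.

Lemma bounded_below_mulmx m n p (a b : R) (A : 'M[R]_(m, n)) (B : 'M[R]_(n, p)) :
  0 <= a -> bounded_below a A -> bounded_below b B -> bounded_below (a * b) (A *m B).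
Proof.
move=> a_ge0 Aa Bb x; rewrite -mulmxA; apply: le_trans (Aa _).
by rewrite -mulrA ler_wpM2l.
Qed.

Lemma bounded_below_mprod n (c : R) (W : nat -> 'M[R]_n) l1 k :
  0 <= c -> (forall l, (l1 <= l < l1 + k)%N -> bounded_below c (W l)) ->
  bounded_below (c ^+ k) (mprod W l1 k).
Proof.
move=> c_ge0; elim: k => [_ x|k IHk Wc]; first by rewrite mul1mx mul1r.
rewrite exprS; apply: bounded_below_mulmx => //.
  by apply: Wc; rewrite leq_addr /= ltn_add2l.
by apply: IHk => l /andP[l1l lk]; apply: Wc; rewrite l1l (ltn_trans lk) // ltn_add2l.
Qed.

Lemma bounded_below_trmx n (c : R) (A : 'M[R]_n) :
  bounded_below c A^T -> bounded_below c A.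
Proof.
move=> Atc x; have [c_le0|c_gt0] := lerP c 0.
  by apply: le_trans (sqnorm_ge0 _); rewrite mulr_le0_ge0 ?sqnorm_ge0.
have unitA : A \in unitmx.
  rewrite unitmxE unitfE; apply/negP => /det0P[v v0 vA].
  have := Atc v^T; rewrite -trmx_mul vA trmx0 sqnorm0.
  by rewrite leNgt pmulr_rgt0 // sqnorm_gt0 trmx_eq0 v0.
set C := invmx A^T.
have C_le : c * sqnorm (C *m x) <= sqnorm x.
  by have := Atc (C *m x); rewrite mulmxA mulmxV ?unitmx_tr // mul1mx.
(* [|x|^2 = <C x, A x>], so [c |x|^4 <= c |C x|^2 |A x|^2 <= |x|^2 |A x|^2] *)
have x_dot : sqnorm x = vdot (C *m x) (A *m x).
  by rewrite vdot_mulmx mulmxA mulmxV ?unitmx_tr // mul1mx.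
have CS := vdot_CauchySchwarz (C *m x) (A *m x); rewrite -x_dot in CS.
have [->|x0] := eqVneq x 0; first by rewrite sqnorm0 mulr0 sqnorm_ge0.
rewrite -(ler_pM2l (_ : 0 < sqnorm x)) ?sqnorm_gt0 //.
have := sqnorm_ge0 (A *m x); nra.
Qed.

Lemma bounded_below_gram n (c s e : R) (A B M : 'M[R]_n) :
  A *m A^T + M = B^T *m B + s%:M -> specnorm M <= e -> bounded_below c B ->
  bounded_below (c + s - e) A.
Proof.
move=> gram Me Bc; apply: bounded_below_trmx => y; rewrite sqnorm_mulmx trmxK.
have -> : A *m A^T = B^T *m B + s%:M - M by rewrite -gram addrK.
rewrite mulmxBl mulmxDl vdotBr vdotDr -sqnorm_mulmx.
rewrite mul_scalar_mx vdotZr -/(sqnorm y).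
have := Bc y; have := vdot_mulmx_le_specnorm M y.
have := ler_wpM2r (sqnorm_ge0 y) Me; lra.
Qed.

Lemma bounded_below_mulmx_trmx m n p (c : R) (G : 'M[R]_(m, n)) (Q : 'M[R]_(p, n)) :
  bounded_below c Q -> c * frob G ^+ 2 <= frob (G *m Q^T) ^+ 2.
Proof.
move=> Qc; rewrite !sqr_frob mulr_sumr; apply: ler_sum => i _.
by rewrite row_mul trmx_mul trmxK.
Qed.

End BoundedBelow.

Lemma bounded_below_layers (R : realType) d L (W : nat -> 'M[R]_d) (delta eps : R) :
  0 <= delta ->
  (forall l, (1 <= l <= L - 2)%N -> specnorm (Dmat W l) <= delta) ->
  specnorm (1%:M + Dmat W L.-1) <= eps ->
  forall l, (1 <= l <= L.-1)%N -> bounded_below (1 - eps - (L.-1 - l)%:R * delta) (W l).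
Proof.
move=> delta_ge0 hD hE.
suff Wk k : (k < L.-1)%N -> bounded_below (1 - eps - k%:R * delta) (W (L.-1 - k)%N).
  by move=> l /andP[l1 lL]; have := Wk (L.-1 - l)%N; rewrite subKn //; apply; lia.
elim: k => [|k IHk] kL.
  have L_gt0 : (0 < L)%N by lia.
  have gram : W L.-1 *m (W L.-1)^T + (1%:M + Dmat W L.-1) = (W L)^T *m W L + 1%:M.
    by rewrite /Dmat prednK // addrCA [W L.-1 *m _ + _]addrC subrK addrC.
  have W_L : bounded_below 0 (W L) by move=> y; rewrite mul0r sqnorm_ge0.
  by have := bounded_below_gram gram hE W_L; rewrite subn0 add0r mul0r subr0.
set l := (L.-1 - k.+1)%N.
have l1 : (L.-1 - k)%N = l.+1 by rewrite /l; lia.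
have gram : W l *m (W l)^T + Dmat W l = (W l.+1)^T *m W l.+1 + 0%:M.
  by rewrite /Dmat [W l *m _ + _]addrC subrK raddf0 addr0.
have Wl1 : bounded_below (1 - eps - k%:R * delta) (W l.+1) by rewrite -l1; apply: IHk; lia.
have := bounded_below_gram gram (hD l _) Wl1; rewrite addr0 -natr1 mulrDl mul1r opprD addrA.
apply; lia.
Qed.

Lemma bernoulli_onem (R : realDomainType) (x : R) k :
  x <= 1 -> 1 - k%:R * x <= (1 - x) ^+ k.
Proof.
move=> x_le1; elim: k => [|k IHk]; first by rewrite mul0r subr0 expr0.
rewrite exprSr -natr1; apply: le_trans (ler_wpM2r _ IHk); last by rewrite subr_ge0.
by have := sqr_ge0 x; have := ler0n R k; nra.
Qed.

Lemma balance_deficit_le_half (R : realFieldType) (N phi delta eps : R) :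
  2 <= N -> 1 < N * phi ^+ 2 -> 0 <= delta ->
  delta <= (2 * N ^+ 3 * phi ^+ 2)^-1 -> eps <= (4 * N ^+ 2)^-1 ->
  (N - 1) * (eps + (N - 2) * delta) <= 2^-1.
Proof.
move=> N_ge2 Nphi_gt1 delta_ge0 delta_le eps_le.
have N_gt0 : 0 < N by lra.
have phi2_gt0 : 0 < phi ^+ 2 by rewrite -(pmulr_rgt0 _ N_gt0); lra.
have {}delta_le : delta * (2 * N ^+ 3 * phi ^+ 2) <= 1.
  by move: delta_le; rewrite -[_^-1]mul1r ler_pdivlMr // pmulr_rgt0 // pmulr_rgt0 ?exprn_gt0.
have {}eps_le : eps * (4 * N ^+ 2) <= 1.
  by move: eps_le; rewrite -[_^-1]mul1r ler_pdivlMr // pmulr_rgt0 ?exprn_gt0.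
have delta_le' : delta * (2 * N ^+ 2) <= 1.
  apply: le_trans _ delta_le.
  have -> : delta * (2 * N ^+ 3 * phi ^+ 2) = delta * (2 * N ^+ 2) * (N * phi ^+ 2) by ring.
  by apply: ler_peMr; [rewrite mulr_ge0 // mulr_ge0 // sqr_ge0 | exact: ltW].
have N1_ge0 : 0 <= N - 1 by lra.
have N12_ge0 : 0 <= (N - 1) * (N - 2) by rewrite mulr_ge0 //; lra.
have := ler_wpM2l N1_ge0 eps_le; have := ler_wpM2l N12_ge0 delta_le'.
rewrite -(ler_pM2r (_ : 0 < 4 * N ^+ 2)) ?pmulr_rgt0 ?exprn_gt0 //; nra.
Qed.

Theorem lemma6 (R : realType) (d L : nat) (Phi : 'M[R]_d) (W : nat -> 'M[R]_d)
  (alpha phi delta eps : R) :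
  (1 <= d)%N -> (2 <= L)%N ->
  0 <= alpha -> 0 < phi ->
  (forall l, (1 <= l <= L.-1)%N -> specnorm (W l) <= alpha) ->
  1 <= alpha ^+ (2 * L.-1) -> alpha ^+ (2 * L.-1) < L%:R * phi ^+ 2 ->
  (forall l, (1 <= l <= L - 2)%N -> specnorm (Dmat W l) <= delta) ->
  specnorm (1%:M + Dmat W L.-1) <= eps ->
  delta <= (2 * L%:R ^+ 3 * phi ^+ 2)^-1 ->
  eps <= (4 * L%:R ^+ 2)^-1 ->
  frob (gradL L W Phi) ^+ 2 >= risk L W Phi.
Proof.
(* of the hypotheses involving [alpha] only their consequence [1 < L phi^2] is used *)
move=> _ L_ge2 _ phi_gt0 _ alpha_ge1 alpha_lt hD hE delta_le eps_le.
(* when [L = 2] nothing constrains [delta], which may then be negative *)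
set dl := Num.max delta 0.
have dl_ge0 : 0 <= dl by rewrite le_max lexx orbT.
have hD' l : (1 <= l <= L - 2)%N -> specnorm (Dmat W l) <= dl.
  by move=> /hD /le_trans; apply; rewrite le_max lexx.
set x := eps + (L - 2)%:R * dl.
have Wx l : (1 <= l < 1 + L.-1)%N -> bounded_below (1 - x) (W l).
  move=> /andP[l1 lL]; apply: bounded_belowW (bounded_below_layers dl_ge0 hD' hE _); last by lia.
  by rewrite /x opprD addrA lerD2l lerN2 ler_wpM2r // ler_nat; lia.
have x_budget : L.-1%:R * x <= 2^-1.
  have Lphi_gt1 : 1 < L%:R * phi ^+ 2 := le_lt_trans alpha_ge1 alpha_lt.
  have dl_le : dl <= (2 * L%:R ^+ 3 * phi ^+ 2)^-1.
    by rewrite ge_max delta_le invr_ge0 !mulr_ge0 ?exprn_ge0 ?ler0n ?ltW.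
  have L_ge2' : 2 <= L%:R :> R by rewrite (ler_nat _ 2).
  have := balance_deficit_le_half L_ge2' Lphi_gt1 dl_ge0 dl_le eps_le.
  by rewrite /x -subn1 !natrB //; lia.
have x_le_half : x <= 2^-1.
  have : 1 <= L.-1%:R :> R by rewrite (ler_nat _ 1); lia.
  nra.
have half_le : 2^-1 <= (1 - x) ^+ L.-1.
  by apply: le_trans (bernoulli_onem _ _) => //; lra.
have Wprod_x : bounded_below ((1 - x) ^+ L.-1) (Wprod W L.-1 1).
  by rewrite /Wprod subn1; apply: bounded_below_mprod Wx; lra.
exact: bounded_below_mulmx_trmx (bounded_belowW half_le Wprod_x).
Qed.
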